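(* Let $X$ be a real Banach space with $\dim X\ge 2$. Then $S_P(X)\ge \tfrac12\left(C'_{NJ}(X)-1\right)$.
   Context: For a real Banach space $X$ with unit sphere $S_X$, the P-angle constant is $S_P(X)=\sup\left\{\frac{\|x+y\|^2+\|x-y\|^2-4}{2\|x+y\|\,\|x-y\|}: x,y\in S_X,\ x\neq \pm y\right\}$. The modified von Neumann–Jordan constant is $C'_{NJ}(X)=\sup\left\{\frac{\|x+y\|^2+\|x-y\|^2}{4}: x,y\in S_X\right\}$. *)

From HB Require Import structures.
From mathcomp Require Import all_boot all_order all_algebra.
From mathcomp Require Import all_classical all_reals all_analysis.
Set Implicit Arguments. Unset Strict Implicit. Unset Printing Implicit Defensive.
Import Order.TTheory GRing.Theory Num.Theory.
Import numFieldNormedType.Exports.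
Local Open Scope classical_set_scope.
Local Open Scope ring_scope.

Definition unit_sphere {R : realType} (X : normedModType R) : set X :=
  [set x | `|x| = 1].

Definition SP_const {R : realType} (X : normedModType R) : \bar R :=
  ereal_sup [set ((`|p.1 + p.2| ^+ 2 + `|p.1 - p.2| ^+ 2 - 4) /
                   (2 * `|p.1 + p.2| * `|p.1 - p.2|))%:E
            | p in [set p : X * X | `|p.1| = 1 /\ `|p.2| = 1
                                    /\ p.1 <> p.2 /\ p.1 <> - p.2]].

Definition CNJ'_const {R : realType} (X : normedModType R) : \bar R :=
  ereal_sup [set ((`|p.1 + p.2| ^+ 2 + `|p.1 - p.2| ^+ 2) / 4)%:E
            | p in [set p : X * X | `|p.1| = 1 /\ `|p.2| = 1]].

Definition dim_ge2 {R : realType} (X : normedModType R) : Prop :=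
  exists x y : X, forall a b : R, a *: x + b *: y = 0 -> a = 0 /\ b = 0.

(* The proof rests on isosceles orthogonality.  In a space of dimension at
   least 2 there are unit vectors x, y with |x + y| = |x - y| =: a; this
   follows from the intermediate value theorem applied to
   s |-> |  |w| x + w | - |  |w| x - w |  along the line w = z + s x, which
   changes sign between s = -2|z| and s = 2|z|.  For such a pair the P-angle
   ratio is (a^2 - 2) / a^2, and replacing (x, y) by ((x + y)/a, (x - y)/a)
   replaces a by 2/a, so one of the two pairs has a nonnegative ratio and
   S_P(X) >= 0.  Finally, for unit x, y with A = |x + y|, B = |x - y| <= 2,
   either A^2 + B^2 <= 4, or A^2 + B^2 - 4 <= 2 A B S_P(X) <= 8 S_P(X); in
   both cases (A^2 + B^2)/4 <= 2 S_P(X) + 1. *)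
From HB Require Import structures.
From mathcomp Require Import all_boot all_order all_algebra.
From mathcomp Require Import all_classical all_reals all_analysis.
From mathcomp Require Import ring lra.
Set Implicit Arguments. Unset Strict Implicit. Unset Printing Implicit Defensive.
Import Order.TTheory GRing.Theory Num.Theory.
Import numFieldNormedType.Exports.
Local Open Scope ring_scope.

Lemma njsum_le_of_angle_ratio_le (R : realFieldType) (A B s : R) :
  0 <= A <= 2 -> 0 <= B <= 2 -> 0 <= s ->
  (0 < A -> 0 < B -> (A ^+ 2 + B ^+ 2 - 4) / (2 * A * B) <= s) ->
  (A ^+ 2 + B ^+ 2) / 4 <= s * 2 + 1.
Proof.
move=> /andP[A0 A2] /andP[B0 B2] s0 hratio; rewrite ler_pdivrMr //.
have [small|large] := lerP (A ^+ 2 + B ^+ 2) 4; first by clear hratio; lra.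
have Ap : 0 < A by rewrite lt_neqAle A0 andbT; apply/eqP => A_0; nra.
have Bp : 0 < B by rewrite lt_neqAle B0 andbT; apply/eqP => B_0; nra.
have {hratio} : A ^+ 2 + B ^+ 2 - 4 <= s * (2 * A * B).
  by rewrite -ler_pdivrMr ?mulr_gt0 //; exact: hratio.
have : s * (2 * A * B) <= s * 8 by rewrite ler_wpM2l //; nra.
lra.
Qed.

Section SPconstant.
Variables (R : realType) (X : normedModType R).

Definition angle_ratio (x y : X) : R :=
  (`|x + y| ^+ 2 + `|x - y| ^+ 2 - 4) / (2 * `|x + y| * `|x - y|).

Lemma angle_ratio_le_SP (x y : X) : `|x| = 1 -> `|y| = 1 ->
  x != y -> x != - y -> ((angle_ratio x y)%:E <= SP_const X)%E.
Proof.
move=> x1 y1 /eqP xNy /eqP xNNy; apply: ereal_sup_ubound.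
by exists (x, y).
Qed.

Lemma angle_ratio_isosceles (x y : X) (b : R) :
  `|x + y| = b -> `|x - y| = b -> angle_ratio x y = (b ^+ 2 - 2) / b ^+ 2.
Proof.
rewrite /angle_ratio => -> ->; have [->|b0] := eqVneq b 0.
  by rewrite !(expr0n, mulr0, invr0).
by field.
Qed.

Lemma normr_normalize (v : X) : v != 0 -> `| `|v|^-1 *: v| = 1.
Proof.
move=> v0; have nv0 : `|v| != 0 by rewrite normr_eq0.
by rewrite normrZ normrV ?unitfE // normr_id mulVf.
Qed.

Lemma isosceles_norm_ge1 (x y : X) : `|x| = 1 -> `|x + y| = `|x - y| ->
  1 <= `|x + y|.
Proof.
move=> x1 iso; have := ler_normD (x + y) (x - y).
by rewrite addrACA subrr addr0 -mulr2n -scaler_nat normrZ x1 normr_nat -iso; lra.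
Qed.

Lemma SP_ge0_of_isosceles_large (x y : X) (b : R) : `|x| = 1 -> `|y| = 1 ->
  `|x + y| = b -> `|x - y| = b -> 2 <= b ^+ 2 -> (0 <= SP_const X)%E.
Proof.
move=> x1 y1 xy_b xy_b' b2.
have b0 : 0 < b by rewrite -xy_b (lt_le_trans ltr01) // isosceles_norm_ge1 ?xy_b.
have xNy : x != y by rewrite -subr_eq0 -normr_gt0 xy_b'.
have xNNy : x != - y by rewrite -addr_eq0 -normr_gt0 xy_b.
apply: le_trans (angle_ratio_le_SP x1 y1 xNy xNNy).
by rewrite (angle_ratio_isosceles xy_b xy_b') lee_fin divr_ge0 ?subr_ge0 ?sqr_ge0.
Qed.

Lemma SP_ge0_of_isosceles (x y : X) : `|x| = 1 -> `|y| = 1 ->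
  `|x + y| = `|x - y| -> (0 <= SP_const X)%E.
Proof.
move=> x1 y1 iso; set a := `|x + y|.
have a1 : 1 <= a := isosceles_norm_ge1 x1 iso.
have a0 : 0 < a by lra.
have [a2|a2] := lerP 2 (a ^+ 2).
  exact: SP_ge0_of_isosceles_large x1 y1 erefl _ a2.
set u := a^-1 *: (x + y); set v := a^-1 *: (x - y).
have u1 : `|u| = 1 by rewrite normr_normalize // -normr_gt0.
have v1 : `|v| = 1 by rewrite /v /a iso normr_normalize // -normr_gt0 -iso.
have uDv : u + v = (2 / a) *: x.
  by rewrite -scalerDr addrACA subrr addr0 -mulr2n -scaler_nat scalerA mulrC.
have uBv : u - v = (2 / a) *: y.
  by rewrite -scalerBr opprB addrC addrA subrK -mulr2n -scaler_nat scalerA mulrC.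
have norm_scaled (w : X) : `|w| = 1 -> `|(2 / a) *: w| = 2 / a.
  by move=> w1; rewrite normrZ w1 mulr1 ger0_norm // divr_ge0 // ltW.
apply: (SP_ge0_of_isosceles_large u1 v1 _ _ (b := 2 / a)).
- by rewrite uDv norm_scaled.
- by rewrite uBv norm_scaled.
- by rewrite expr_div_n ler_pdivlMr ?exprn_gt0 //; lra.
Qed.

Definition isosceles_gap (x w : X) : R :=
  `| `|w| *: x + w| - `| `|w| *: x - w|.

Lemma isosceles_gapNr (x w : X) : isosceles_gap x (- w) = - isosceles_gap x w.
Proof. by rewrite /isosceles_gap normrN opprK opprB. Qed.

Lemma continuous_isosceles_gap (x : X) : continuous (isosceles_gap x).
Proof.
have cont_norm (f : X -> X) : continuous f -> continuous (fun w => `|f w|).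
  by move=> cf w; apply: continuous_comp (cf w) (@norm_continuous _ _ _).
have cont_nx : continuous (fun w : X => `|w| *: x).
  by move=> w; apply: continuousZr_tmp; exact: norm_continuous.
move=> w; apply: cvgB.
- by apply: (cont_norm (fun w => _ + _)) => v; apply: cvgD; [exact: cont_nx|].
- by apply: (cont_norm (fun w => _ - _)) => v; apply: cvgB; [exact: cont_nx|].
Qed.

Lemma isosceles_gap_ge0 (x z : X) : `|x| = 1 ->
  0 <= isosceles_gap x (z + (2 * `|z|) *: x).
Proof.
move=> x1; set t := 2 * `|z|; set n := `|z + t *: x|.
have t0 : 0 <= t by rewrite mulr_ge0.
have normZx (c : R) : `|c *: x| = `|c| by rewrite normrZ x1 mulr1.
have n_near_t : `|n - t| <= `|z|.
  have := ler_dist_dist (z + t *: x) (t *: x).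
  by rewrite addrK normZx (ger0_norm t0).
have plus_lb : n + t - `|z| <= `|n *: x + (z + t *: x)|.
  have -> : n *: x + (z + t *: x) = (n + t) *: x + z.
    by rewrite scalerDl addrA addrAC.
  have := lerB_normD ((n + t) *: x) z.
  by rewrite normZx (ger0_norm (addr_ge0 (normr_ge0 _) t0)).
have minus_ub : `|n *: x - (z + t *: x)| <= `|n - t| + `|z|.
  have -> : n *: x - (z + t *: x) = (n - t) *: x + - z.
    by rewrite scalerBl opprD addrA addrAC.
  by have := ler_normD ((n - t) *: x) (- z); rewrite normZx normrN.
have n_ge : t - `|z| <= n by move: n_near_t; rewrite ler_norml; lra.
have t_def : t = 2 * `|z| by [].
rewrite /isosceles_gap -/n subr_ge0; lra.
Qed.

Lemma exists_isosceles_unit_pair : dim_ge2 X ->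
  exists x y : X, `|x| = 1 /\ `|y| = 1 /\ `|x + y| = `|x - y|.
Proof.
move=> [x0 [z indep]].
have x00 : x0 != 0.
  apply/eqP => x0_0; have := indep 1 0; rewrite x0_0 scaler0 scale0r addr0.
  by move=> /(_ erefl) [/eqP]; rewrite oner_eq0.
set x := `|x0|^-1 *: x0; have x1 : `|x| = 1 := normr_normalize x00.
have line_neq0 (s : R) : z + s *: x != 0.
  apply/eqP => zsx0; have := indep (s / `|x0|) 1.
  rewrite scale1r -scalerA addrC zsx0 => /(_ erefl) [_ /eqP].
  by rewrite oner_eq0.
pose gap s := isosceles_gap x (z + s *: x); set t := 2 * `|z|.
have gap_t : 0 <= gap t := isosceles_gap_ge0 z x1.
have gap_Nt : gap (- t) <= 0.
  rewrite /gap (_ : z + (- t) *: x = - (- z + t *: x)); last first.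
    by rewrite opprD opprK scaleNr.
  rewrite isosceles_gapNr oppr_le0 /t -(normrN z).
  exact: isosceles_gap_ge0.
have line_cont : continuous (fun s : R => z + s *: x).
  move=> s; apply: cvgD; first exact: cvg_cst.
  exact: (@continuousZr_tmp _ _ _ id).
have [c _ gap_c] : exists2 c, c \in `[- t, t] & gap c = 0.
  apply: IVT; first by rewrite /t; have := normr_ge0 z; lra.
    apply/continuous_subspaceT => s.
    by apply: (continuous_comp (line_cont s)); exact: continuous_isosceles_gap.
  by rewrite ge_min le_max gap_t gap_Nt orbT.
set w := z + c *: x; set n := `|w|.
have n0 : n != 0 by rewrite normr_eq0 line_neq0.
exists x, (n^-1 *: w); split; first exact: x1.
split; first exact: normr_normalize (line_neq0 c).
have -> : x = n^-1 *: (n *: x) by rewrite scalerA mulVf // scale1r.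
rewrite -scalerDr -scalerBr !normrZ; congr (_ * _).
by apply/eqP; rewrite -subr_eq0; apply/eqP.
Qed.

Lemma CNJ'_le_SP : dim_ge2 X -> (CNJ'_const X <= SP_const X * 2%:E + 1%:E)%E.
Proof.
move=> dimX; have [x [y [x1 [y1 iso]]]] := exists_isosceles_unit_pair dimX.
have := SP_ge0_of_isosceles x1 y1 iso.
case hSP: (SP_const X) => [s| |] //; last first.
  by move=> _; rewrite mulyr gtr0_sg // mul1e addye // leey.
rewrite lee_fin => s0; apply: ge_ereal_sup => _ [[p q] /= [p1 q1] <-].
rewrite -EFinM -EFinD lee_fin; apply: njsum_le_of_angle_ratio_le s0 _.
- by rewrite normr_ge0 /=; have := ler_normD p q; lra.
- by rewrite normr_ge0 /=; have := ler_normD p (- q); rewrite normrN; lra.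
move=> pDq pBq; rewrite -lee_fin -hSP; apply: angle_ratio_le_SP p1 q1 _ _.
  by rewrite -subr_eq0 -normr_gt0.
by rewrite -addr_eq0 -normr_gt0.
Qed.

End SPconstant.

Theorem theorem4p1 (R : realType) (X : completeNormedModType R) :
  dim_ge2 X ->
  (((CNJ'_const X - 1%:E) * (2^-1)%:E) <= SP_const X)%E.
Proof.
move=> dimX; rewrite lee_pdivrMr // leeBlDr //.
exact: CNJ'_le_SP.
Qed.
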